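(* Let $\phi\in\mathrm{LTL}[\mathsf{X},\mathsf{wX},\mathsf{F},\mathsf{G}]$ and $k\in\mathbb N$. Suppose there are $A,B\subseteq\Sigma^+$ such that $\phi$ separates $A$ from $B$, and every deduction tree of $\langle A,B\rangle$ has size at least $k$. Then $\mathrm{size}(\phi)\ge k$.
   Context: Let $AP$ be a finite set of atomic propositions and $\Sigma=2^{AP}$. Formulae of $\mathrm{LTL}[\mathsf{X},\mathsf{wX},\mathsf{F},\mathsf{G}]$ are generated by $\phi::=p\mid\neg p\mid\phi\lor\phi\mid\phi\land\phi\mid\mathsf{X}\phi\mid\mathsf{wX}\phi\mid\mathsf{F}\phi\mid\mathsf{G}\phi$ ($p\in AP$), interpreted on $\sigma\in\Sigma^+$ at positions $0\le i<|\sigma|$: literals/Booleans as usual; $\mathsf{X}\phi$: $i+1<|\sigma|$ and $\phi$ at $i+1$; $\mathsf{wX}\phi$: $i+1=|\sigma|$ or $\phi$ at $i+1$; $\mathsf{F}\phi$/$\mathsf{G}\phi$: $\phi$ at some/every $j$ with $i\le j<|\sigma|$. Size: literals 1, unary operators add 1, binary connectives sum sizes plus 1. For $C\subseteq\Sigma^+$, $C\models\phi$ means $\sigma,0\models\phi$ for all $\sigma\in C$ and $C\perp\phi$ means $\sigma,0\not\models\phi$ for all $\sigma\in C$; $\phi$ separates $A$ from $B$ if $A\models\phi$ and $B\perp\phi$. Notation: $\sigma^{(j)}$ is the suffix of $\sigma$ starting at position $j$; $A^{\mathsf X}=\{\sigma^{(1)}:\sigma\in A,|\sigma|\ge2\}$;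 $A^{\mathsf G}=\{\sigma^{(j)}:\sigma\in A,0\le j<|\sigma|\}$; a future point for $A$ is $f:A\to\mathbb N$ with $f(\sigma)<|\sigma|$, and $A^f=\{\sigma^{(f(\sigma))}:\sigma\in A\}$. Proof system on terms $\langle A,B\rangle$ ($A,B\subseteq\Sigma^+$) with rules: Atomic: $\langle A,B\rangle$ if $A\models\alpha$, $B\perp\alpha$ for a literal $\alpha$; Or: $\langle A_1\uplus A_2,B\rangle$ from $\langle A_1,B\rangle,\langle A_2,B\rangle$; And: $\langle A,B_1\uplus B_2\rangle$ from $\langle A,B_1\rangle,\langle A,B_2\rangle$; Next: $\langle A,B\rangle$ from $\langle A^{\mathsf X},B^{\mathsf X}\rangle$ if $|A^{\mathsf X}|=|A|$; WeakNext: $\langle A,B\rangle$ from $\langle A^{\mathsf X},B^{\mathsf X}\rangle$ if $|B^{\mathsf X}|=|B|$; Future: $\langle A,B\rangle$ from $\langle A^f,B^{\mathsf G}\rangle$, $f$ a future point for $A$; Globally: $\langle A,B\rangle$ from $\langle A^{\mathsf G},B^f\rangle$, $f$ a future point for $B$ ($\uplus$ is disjoint union). A deduction tree for $\langle A,B\rangle$ is a finite tree of rule applications rooted at $\langle A,B\rangle$ in which every hypothesis is itself derived; its size is the number of rule applications. *)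

From mathcomp Require Import all_boot.
Set Implicit Arguments. Unset Strict Implicit. Unset Printing Implicit Defensive.

Section LTL.
Variable AP : finType.

(* letters of Sigma = 2^AP, words are sequences of letters *)
Definition letter := {set AP}.
Definition word := seq letter.
Definition lang := word -> Prop.

Inductive ltl : Type :=
| Lit of AP
| NLit of AP
| Or of ltl & ltl
| And of ltl & ltl
| Next of ltl
| WNext of ltl
| Fut of ltl
| Glob of ltl.

Fixpoint ltl_size (phi : ltl) : nat :=
  match phi with
  | Lit _ | NLit _ => 1
  | Or a b | And a b => (ltl_size a + ltl_size b).+1
  | Next a | WNext a | Fut a | Glob a => (ltl_size a).+1
  end.

(* sigma, i |= phi  (only meaningful for i < size sigma) *)
Fixpoint sat (s : word) (i : nat) (phi : ltl) : Prop :=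
  match phi with
  | Lit p => p \in nth set0 s i
  | NLit p => p \notin nth set0 s i
  | Or a b => sat s i a \/ sat s i b
  | And a b => sat s i a /\ sat s i b
  | Next a => i.+1 < size s /\ sat s i.+1 a
  | WNext a => i.+1 = size s \/ sat s i.+1 a
  | Fut a => exists j, i <= j < size s /\ sat s j a
  | Glob a => forall j, i <= j < size s -> sat s j a
  end.

Definition is_lit (phi : ltl) : bool :=
  match phi with Lit _ | NLit _ => true | _ => false end.

Definition models (C : lang) (phi : ltl) := forall s, C s -> sat s 0 phi.
Definition perp (C : lang) (phi : ltl) := forall s, C s -> ~ sat s 0 phi.
Definition separates (phi : ltl) (A B : lang) := models A phi /\ perp B phi.

Definition nonempty_words (C : lang) := forall s, C s -> s <> [::].

Definition suffix (s : word) (j : nat) : word := drop j s.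

Definition langX (C : lang) : lang :=
  fun t => exists2 s, C s & 2 <= size s /\ t = suffix s 1.
Definition langG (C : lang) : lang :=
  fun t => exists2 s, C s & exists2 j, j < size s & t = suffix s j.
Definition future_point (C : lang) (f : word -> nat) :=
  forall s, C s -> f s < size s.
Definition langF (C : lang) (f : word -> nat) : lang :=
  fun t => exists2 s, C s & t = suffix s (f s).

Definition disj_union (C C1 C2 : lang) :=
  (forall s, C s <-> C1 s \/ C2 s) /\ (forall s, C1 s -> C2 s -> False).

(* derivation A B n : there is a deduction tree for <A,B> with n rule
   applications.  The side conditions |A^X| = |A| resp. |B^X| = |B| are
   read as "every word of A (resp. B) has length >= 2". *)
Inductive derivation : lang -> lang -> nat -> Prop :=
| R_atomic (A B : lang) (alpha : ltl) :
    is_lit alpha -> models A alpha -> perp B alpha -> derivation A B 1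
| R_or (A A1 A2 B : lang) n1 n2 :
    disj_union A A1 A2 -> derivation A1 B n1 -> derivation A2 B n2 ->
    derivation A B (n1 + n2).+1
| R_and (A B B1 B2 : lang) n1 n2 :
    disj_union B B1 B2 -> derivation A B1 n1 -> derivation A B2 n2 ->
    derivation A B (n1 + n2).+1
| R_next (A B : lang) n :
    (forall s, A s -> 2 <= size s) ->
    derivation (langX A) (langX B) n -> derivation A B n.+1
| R_wnext (A B : lang) n :
    (forall s, B s -> 2 <= size s) ->
    derivation (langX A) (langX B) n -> derivation A B n.+1
| R_future (A B : lang) (f : word -> nat) n :
    future_point A f ->
    derivation (langF A f) (langG B) n -> derivation A B n.+1
| R_globally (A B : lang) (f : word -> nat) n :
    future_point B f ->
    derivation (langG A) (langF B f) n -> derivation A B n.+1.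

End LTL.

(* By induction on phi, a separating formula is turned into a deduction tree
   with one rule application per connective: literals give Atomic, a
   disjunction splits A according to the left disjunct (Or), a conjunction
   splits B dually (And), X and wX move both sets one step forward, and F
   (resp. G) uses as future point a witness position for A (resp. a
   counterexample position for B). *)
From Stdlib Require Import Classical ClassicalEpsilon.
From mathcomp Require Import all_boot zify.

Section Completeness.
Variable AP : finType.
Implicit Types (phi a : ltl AP) (s : word AP) (A B C : lang AP).

Lemma sat_drop phi s j i : sat (drop j s) i phi <-> sat s (i + j) phi.
Proof.
elim: phi s j i => [p|p|a IHa b IHb|a IHa b IHb|a IH|a IH|a IH|a IH] s j i /=.
- by rewrite nth_drop addnC.
- by rewrite nth_drop addnC.
- by rewrite IHa IHb.
- by rewrite IHa IHb.
- by rewrite IH size_drop addSn; split=> -[lt_ij ?]; split=> //; lia.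
- by rewrite IH size_drop addSn; split=> -[eq_ij|?]; (try by right); left; lia.
- rewrite size_drop; split=> -[k [lt_k sat_k]].
  + by exists (k + j); split; [lia | rewrite -IH].
  + exists (k - j); split; first lia.
    by rewrite IH (_ : k - j + j = k) //; lia.
- rewrite size_drop; split=> sat_all k lt_k.
  + by rewrite (_ : k = k - j + j) -?IH; [apply: sat_all; lia | lia].
  + by rewrite IH; apply: sat_all; lia.
Qed.

Lemma sat_suffix phi s j : sat (suffix s j) 0 phi <-> sat s j phi.
Proof. by rewrite /suffix sat_drop add0n. Qed.

Lemma suffix_nonempty s j : j < size s -> suffix s j <> [::].
Proof. by move=> lt_js /(congr1 size); rewrite size_drop /=; lia. Qed.

Lemma nonempty_langX C : nonempty_words (langX C).
Proof. by move=> t [s _ [ge2 ->]]; apply: suffix_nonempty. Qed.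

Lemma nonempty_langG C : nonempty_words (langG C).
Proof. by move=> t [s _ [j lt_j ->]]; apply: suffix_nonempty. Qed.

Lemma nonempty_langF {C f} : future_point C f -> nonempty_words (langF C f).
Proof. by move=> fC t [s Cs ->]; apply/suffix_nonempty/fC. Qed.

Lemma nonempty_restrict (P : word AP -> Prop) {C} :
  nonempty_words C -> nonempty_words (fun s => C s /\ P s).
Proof. by move=> neC s [/neC]. Qed.

Lemma disj_union_restrict C (P : word AP -> Prop) :
  disj_union C (fun s => C s /\ P s) (fun s => C s /\ ~ P s).
Proof.
split=> [s|s [_ Ps] [_ nPs] //]; split=> [Cs|[[]|[]] //].
by case: (classic (P s)); [left | right].
Qed.

Lemma future_point_choice C (P : word AP -> nat -> Prop) :
  (forall s, C s -> exists2 j, j < size s & P s j) ->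
  exists2 f, future_point C f & forall s, C s -> P s (f s).
Proof.
move=> witness.
pose Q s j := j < size s /\ P s j.
pose f s := epsilon (inhabits 0) (Q s).
have f_spec s : C s -> Q s (f s).
  by move=> /witness [j lt_j Psj]; apply: (epsilon_spec _ (Q s)); exists j.
by exists f => s /f_spec [].
Qed.

Lemma models_langX C a :
  (forall s, C s -> 2 <= size s -> sat s 1 a) -> models (langX C) a.
Proof. by move=> satC t [s Cs [ge2 ->]]; rewrite sat_suffix; apply: satC. Qed.

Lemma perp_langX C a :
  (forall s, C s -> 2 <= size s -> ~ sat s 1 a) -> perp (langX C) a.
Proof. by move=> nsatC t [s Cs [ge2 ->]]; rewrite sat_suffix; apply: nsatC. Qed.

Lemma models_langG C a :
  (forall s j, C s -> j < size s -> sat s j a) -> models (langG C) a.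
Proof. by move=> satC t [s Cs [j lt_j ->]]; rewrite sat_suffix; apply: satC. Qed.

Lemma perp_langG C a :
  (forall s j, C s -> j < size s -> ~ sat s j a) -> perp (langG C) a.
Proof. by move=> nsatC t [s Cs [j lt_j ->]]; rewrite sat_suffix; apply: nsatC. Qed.

Lemma models_langF C f a :
  (forall s, C s -> sat s (f s) a) -> models (langF C f) a.
Proof. by move=> satC t [s Cs ->]; rewrite sat_suffix; apply: satC. Qed.

Lemma perp_langF C f a :
  (forall s, C s -> ~ sat s (f s) a) -> perp (langF C f) a.
Proof. by move=> nsatC t [s Cs ->]; rewrite sat_suffix; apply: nsatC. Qed.

Lemma separates_Or {a b A B} :
  separates (Or a b) A B ->
  separates a (fun s => A s /\ sat s 0 a) B /\
  separates b (fun s => A s /\ ~ sat s 0 a) B.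
Proof.
move=> [satA nsatB]; split; split.
- by move=> s [].
- by move=> s Bs ?; apply: (nsatB s Bs); left.
- by move=> s [/satA []].
- by move=> s Bs ?; apply: (nsatB s Bs); right.
Qed.

Lemma separates_And {a b A B} :
  separates (And a b) A B ->
  separates a A (fun s => B s /\ ~ sat s 0 a) /\
  separates b A (fun s => B s /\ sat s 0 a).
Proof.
move=> [satA nsatB]; split; split.
- by move=> s /satA [].
- by move=> s [].
- by move=> s /satA [].
- by move=> s [Bs ?] ?; apply: (nsatB s Bs).
Qed.

Lemma separates_Next {a A B} :
  separates (Next a) A B -> separates a (langX A) (langX B).
Proof.
move=> [satA nsatB]; split.
- by apply: models_langX => s /satA [].
- by apply: perp_langX => s Bs ge2 ?; apply: (nsatB s Bs).
Qed.

Lemma separates_WNext {a A B} :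
  separates (WNext a) A B -> separates a (langX A) (langX B).
Proof.
move=> [satA nsatB]; split.
- by apply: models_langX => s /satA [|//]; lia.
- by apply: perp_langX => s Bs ge2 ?; apply: (nsatB s Bs); right.
Qed.

(* The side condition of WeakNext: a word of length 1 satisfies every wX a. *)
Lemma perp_WNext_size a B :
  nonempty_words B -> perp B (WNext a) -> forall s, B s -> 2 <= size s.
Proof.
move=> neB nsatB [|x [|y s]] Bs //; first by have := neB _ Bs.
by case: (nsatB _ Bs); left.
Qed.

Lemma separates_Fut {a A B} :
  separates (Fut a) A B ->
  exists2 f, future_point A f & separates a (langF A f) (langG B).
Proof.
move=> [satA nsatB].
have [f fA satf] : exists2 f, future_point A f & forall s, A s -> sat s (f s) a.
  by apply: (@future_point_choice A (fun s j => sat s j a)) => s /satA [j [lt_j ?]]; exists j.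
exists f => //; split; first exact: models_langF.
by apply: perp_langG => s j Bs lt_j ?; apply: (nsatB s Bs); exists j.
Qed.

Lemma separates_Glob {a A B} :
  separates (Glob a) A B ->
  exists2 f, future_point B f & separates a (langG A) (langF B f).
Proof.
move=> [satA nsatB].
have [f fB nsatf] : exists2 f, future_point B f & forall s, B s -> ~ sat s (f s) a.
  apply: (@future_point_choice B (fun s j => ~ sat s j a)) => s Bs; apply: NNPP => no_witness.
  by apply: (nsatB s Bs) => j /andP[_ lt_j]; apply: NNPP => ?; apply: no_witness; exists j.
exists f => //; split; last exact: perp_langF.
by apply: models_langG => s j As lt_j; apply: satA.
Qed.

Lemma derivation_of_separates phi A B :
  nonempty_words A -> nonempty_words B -> separates phi A B ->
  derivation A B (ltl_size phi).
Proof.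
elim: phi A B => [p|p|a IHa b IHb|a IHa b IHb|a IH|a IH|a IH|a IH] A B neA neB sepAB /=.
- by case: sepAB; apply: (@R_atomic _ _ _ (Lit p)).
- by case: sepAB; apply: (@R_atomic _ _ _ (NLit p)).
- have [sepa sepb] := separates_Or sepAB.
  apply: R_or (disj_union_restrict A (fun s => sat s 0 a)) _ _.
  + exact: IHa (nonempty_restrict _ neA) neB sepa.
  + exact: IHb (nonempty_restrict _ neA) neB sepb.
- have [sepa sepb] := separates_And sepAB.
  rewrite addnC; apply: R_and (disj_union_restrict B (fun s => sat s 0 a)) _ _.
  + exact: IHb neA (nonempty_restrict _ neB) sepb.
  + exact: IHa neA (nonempty_restrict _ neB) sepa.
- apply: R_next; first by case: sepAB => satA _ s /satA [].
  exact: IH (nonempty_langX A) (nonempty_langX B) (separates_Next sepAB).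
- apply: R_wnext; first exact: perp_WNext_size neB sepAB.2.
  exact: IH (nonempty_langX A) (nonempty_langX B) (separates_WNext sepAB).
- have [f fA sepa] := separates_Fut sepAB.
  exact: R_future fA (IH _ _ (nonempty_langF fA) (nonempty_langG B) sepa).
- have [f fB sepa] := separates_Glob sepAB.
  exact: R_globally fB (IH _ _ (nonempty_langG A) (nonempty_langF fB) sepa).
Qed.

End Completeness.

Theorem corollary2 (AP : finType) (phi : ltl AP) (k : nat) (A B : lang AP) :
  nonempty_words A -> nonempty_words B ->
  separates phi A B ->
  (forall n, derivation A B n -> k <= n) ->
  k <= ltl_size phi.
Proof.
move=> neA neB sepAB minimal.
exact/minimal/derivation_of_separates.
Qed.
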